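(* Let $K\ge 2$, let $m_1<\cdots<m_K$ be pairwise co-prime positive integers, $M$ a positive integer and $M_k=Mm_k$. Let $N_1,N_2$ be nonnegative integers, $r_{l,k}=\langle N_l\rangle_{M_k}$, $r_l^c=\langle N_l\rangle_M$, and let $\tilde r_{l,k}=r_{l,k}+\Delta r_{l,k}$ ($l=1,2$, $k=1,\ldots,K$) with integer errors $\Delta r_{l,k}$. Let $\tau=\max_{l,k}|\Delta r_{l,k}|$ and $\tilde r^c_{l,k}=\langle\tilde r_{l,k}\rangle_M$. List the $2K$ numbers $\tilde r^c_{l,k}$ ($l=1,2$, $k=1,\ldots,K$, counted with multiplicity) in nondecreasing order as $s_1\le s_2\le\cdots\le s_{2K}$, and define $D_k=s_{k+1}-s_k$ for $k=1,\ldots,2K-1$ and $D_{2K}=s_1-s_{2K}+M$. If $\tau<M/8$, then there exists one and only one index $k_0\in\{1,\ldots,K\}$ with $$D_{k_0}+D_{k_0+K}>M/2.$$ Moreover, define the multisets $\Omega_1=\{s_{k_0+1},\ldots,s_{k_0+K}\}$ and $$\Omega_2=\begin{cases}\{s_1,\ldots,s_K\}, & k_0=K,\\ \{s_{k_0+K+1}-M,\ldots,s_{2K}-M,\ s_1,\ldots,s_{k_0}\}, & k_0\ne K.\end{cases}$$ Then $\max\Omega_1-\min\Omega_1\le 2\tau$ and $\max\Omega_2-\min\Omega_2\le 2\tau$.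
   Context: For a positive integer $n$ and an integer $x$ (possibly negative), $\langle x\rangle_n$ denotes the remainder of $x$ modulo $n$, i.e. the unique element of $\{0,\ldots,n-1\}$ congruent to $x$ modulo $n$. Note $\sum_{k=1}^{2K}D_k=M$ and all $D_k\ge 0$. *)

From HB Require Import structures.
From mathcomp Require Import all_boot all_order all_algebra.
Set Implicit Arguments. Unset Strict Implicit. Unset Printing Implicit Defensive.
Import Order.TTheory GRing.Theory Num.Theory.
Local Open Scope ring_scope.

Section Defs.
Variables (K M : nat) (m : 'I_K -> nat) (N : 'I_2 -> nat) (Delta : 'I_2 -> 'I_K -> int).

Definition rt (l : 'I_2) (k : 'I_K) : int := ((N l %% (M * m k))%N)%:Z + Delta l k.

(* tilde r^c_{l,k} = <tilde r_{l,k}>_M  (intdiv modulo, nonnegative for M > 0) *)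
Definition rtc (l : 'I_2) (k : 'I_K) : int := (rt l k %% (M%:Z))%Z.

Definition tau : nat := \max_(l : 'I_2) \max_(k : 'I_K) `|Delta l k|%N.

Definition svals : seq int := [seq rtc l k | l <- enum 'I_2, k <- enum 'I_K].
Definition ssorted : seq int := sort (fun x y : int => x <= y) svals.

(* s_i, 1-based, i = 1..2K *)
Definition s (i : nat) : int := nth 0 ssorted i.-1.

Definition D (k : nat) : int :=
  if k == (2 * K)%N then s 1 - s (2 * K) + M%:Z else s k.+1 - s k.

Definition Omega1 (k0 : nat) : seq int := [seq s i | i <- iota k0.+1 K].

Definition Omega2 (k0 : nat) : seq int :=
  if k0 == K then [seq s i | i <- iota 1 K]
  else [seq s i - M%:Z | i <- iota (k0 + K).+1 (K - k0)] ++ [seq s i | i <- iota 1 k0].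
End Defs.

Definition spread_le (O : seq int) (b : int) : Prop :=
  forall x y, x \in O -> y \in O -> x - y <= b.

(* The 2K residues form two clusters, the reductions mod M of N_1 + Delta_{1,k}
   and of N_2 + Delta_{2,k}, each inside an arc of length 2 tau of Z/MZ.  Extend
   the sorted residues periodically to U with U (i + 2K) = U i + M.  As 4 tau < M,
   both arcs lift into one window [w, w + M), and the 2K consecutive values of U in
   that window are exactly the two lifted clusters; so the first K of them span at
   most 2 tau, and so do the last K.  Taking k0 at the start of such a block, the
   gaps D_{k0} and D_{k0+K} are the two gaps between the clusters and add up to at
   least M - 4 tau > M/2, whereas every other gap lies inside a cluster and is at
   most 2 tau. *)

From HB Require Import structures.
From mathcomp Require Import all_boot all_order all_algebra zify.
Set Implicit Arguments.
Unset Strict Implicit.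
Unset Printing Implicit Defensive.
Import Order.TTheory GRing.Theory Num.Theory.
Local Open Scope ring_scope.

Lemma count_split_pred (T : Type) (a p : pred T) (s : seq T) :
  count a s = (count (predI a p) s + count (predI a (predC p)) s)%N.
Proof. by elim: s => //= x s ->; case: (a x) (p x) => [] []; rewrite /= ?addnS. Qed.

Lemma count_add3 (T : eqType) (a a1 a2 a3 : pred T) (s : seq T) :
  (forall x, x \in s -> (a1 x + a2 x + a3 x)%N = a x) ->
  (count a1 s + count a2 s + count a3 s)%N = count a s.
Proof.
elim: s => //= x s IHs eq_a; rewrite -(eq_a x (mem_head x s)) -IHs.
  by rewrite !addnA; lia.
by move=> y sy; apply: eq_a; rewrite inE sy orbT.
Qed.

Section TwoClusters.

Variables (t E1 E2 : seq int) (K : nat) (w M b : int).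
Hypotheses (K_gt0 : (0 < K)%N) (M_gt0 : 0 < M) (t_sorted : sorted <=%O t)
  (t_window : forall P : pred int, (forall x, P x -> w <= x < w + M) ->
     count P t = count P (E1 ++ E2))
  (E_window : {in E1 ++ E2, forall x, w <= x < w + M})
  (size_E1 : size E1 = K) (size_E2 : size E2 = K)
  (E1_spread : spread_le E1 b) (E2_spread : spread_le E2 b).

(* As [t] is sorted, its values in the window are [t`_a], ..., [t`_(a + 2K - 1)]. *)
Let a := count (< w) t.

Lemma count_split_window (P : pred int) : (forall x, P x -> x < w + M) ->
  count P t = (count (predI P (< w)) t + count (predI P (>= w)) (E1 ++ E2))%N.
Proof.
move=> P_lt; rewrite -t_window; last by move=> x /andP[/P_lt ? ?]; apply/andP.
rewrite (count_split_pred P (< w)); congr (_ + _)%N.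
by apply: eq_count => x /=; rewrite -leNgt.
Qed.

Lemma count_lt_window_end : count (< (w + M)) t = (a + 2 * K)%N.
Proof.
rewrite count_split_window // (eq_count (a2 := (< w))); last first.
  by move=> x /=; lia.
rewrite -/a [count _ (E1 ++ E2)](@eq_in_count _ _ predT) ?count_predT.
  by rewrite size_cat size_E1 size_E2; lia.
by move=> x /E_window /=; lia.
Qed.

Lemma window_end_le_size : (a + 2 * K <= size t)%N.
Proof. by rewrite -count_lt_window_end count_size. Qed.

Lemma nth_window_mem i : (a <= i < a + 2 * K)%N -> nth 0 t i \in E1 ++ E2.
Proof.
move=> /andP[ai iaK]; set x := nth 0 t i.
have lt_i_size : (i < size t)%N.
  exact: leq_trans iaK window_end_le_size.
have x_win : w <= x < w + M.
  apply/andP; split; first by apply: nth_count_ge; rewrite ?ai.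
  by apply: nth_count_lt; rewrite ?count_lt_window_end.
rewrite -has_pred1 has_count -t_window; last by move=> y /eqP ->.
by rewrite -has_count has_pred1 mem_nth.
Qed.

Lemma spread_nonneg : 0 <= b.
Proof.
have : (0 < size E1)%N by rewrite size_E1.
case: E1 E1_spread => [|x s] // E1_sp _.
by have := E1_sp x x (mem_head x s) (mem_head x s); rewrite subrr.
Qed.

Lemma count_le_cluster mu : mu \in E1 ++ E2 -> (K <= count (<= (mu + b))%R (E1 ++ E2))%N.
Proof.
have all_le E : spread_le E b -> mu \in E -> count (<= (mu + b)) E = size E.
  move=> E_sp muE; apply/eqP; rewrite -all_count; apply/allP => x xE /=.
  by have := E_sp x mu xE muE; lia.
rewrite mem_cat count_cat => /orP[mu1|mu2].
  by rewrite all_le // size_E1 leq_addr.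
by rewrite [count _ E2]all_le // size_E2 leq_addl.
Qed.

Lemma count_lt_cluster nu : nu \in E1 ++ E2 -> (count (< (nu - b))%R (E1 ++ E2) <= K)%N.
Proof.
have none_lt E : spread_le E b -> nu \in E -> count (< (nu - b)) E = 0%N.
  move=> E_sp nuE; apply/eqP; rewrite -leqn0 leqNgt -has_count.
  by apply/hasPn => x xE /=; have := E_sp nu x nuE xE; lia.
rewrite mem_cat count_cat => /orP[nu1|nu2].
  by rewrite none_lt // -size_E2 count_size.
by rewrite [count _ E2]none_lt // addn0 -size_E1 count_size.
Qed.

Lemma lower_cluster : nth 0 t (a + K).-1 - nth 0 t a <= b.
Proof.
set mu := nth 0 t a.
have mu_E : mu \in E1 ++ E2 by apply: nth_window_mem; lia.
have b_ge0 := spread_nonneg.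
have mu_ge_w : w <= mu by have := E_window mu_E; lia.
suff : nth 0 t (a + K).-1 <= mu + b by lia.
apply: nth_count_le => //.
have sub : (count (predI (<= (mu + b))%R (< (w + M))%R) t <= count (<= (mu + b))%R t)%N.
  by apply: sub_count => x /andP[].
apply: leq_trans sub; rewrite count_split_window; last by move=> x /andP[].
rewrite (eq_count (a2 := (< w))); last first.
  by move=> x /=; lia.
rewrite [count _ (E1 ++ E2)](eq_in_count (a2 := (<= (mu + b)))); last first.
  by move=> x /E_window /=; lia.
have := count_le_cluster mu_E; rewrite -/a -(leq_add2l a); apply: leq_trans; lia.
Qed.

Lemma upper_cluster : nth 0 t (a + 2 * K).-1 - nth 0 t (a + K) <= b.
Proof.
set nu := nth 0 t (a + 2 * K).-1.
have nu_E : nu \in E1 ++ E2 by apply: nth_window_mem; lia.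
have b_ge0 := spread_nonneg.
have nu_lt : nu < w + M by have := E_window nu_E; lia.
suff : nu - b <= nth 0 t (a + K) by lia.
apply: nth_count_ge => //; apply/andP; split; last first.
  by apply: leq_trans window_end_le_size; lia.
rewrite count_split_window; last by move=> x /=; lia.
have below : (count (predI (< (nu - b))%R (< w)%R) t <= a)%N by apply: sub_count => x /andP[].
have above : (count (predI (< (nu - b))%R (>= w)%R) (E1 ++ E2) <= K)%N.
  by apply: leq_trans (count_lt_cluster nu_E); apply: sub_count => x /andP[].
exact: leq_add.
Qed.

Lemma sorted_two_clusters :
  [/\ (a + 2 * K <= size t)%N, nth 0 t (a + K).-1 - nth 0 t a <= b
    & nth 0 t (a + 2 * K).-1 - nth 0 t (a + K) <= b].
Proof.
by split; [exact: window_end_le_size | exact: lower_cluster | exact: upper_cluster].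
Qed.

End TwoClusters.

Definition clustered (U : nat -> int) (K : nat) (b : int) (a : nat) : Prop :=
  U (a + K).-1 - U a <= b /\ U (a + 2 * K).-1 - U (a + K)%N <= b.

Definition gap (U : nat -> int) (k : nat) : int := U k - U k.-1.

Section Gaps.

Variables (U : nat -> int) (K : nat) (M b : int).
Hypotheses (U_homo : {homo U : i j / (i <= j)%N >-> i <= j})
  (U_period : forall i, U (i + 2 * K)%N = U i + M) (K_gt0 : (0 < K)%N).

Lemma clusteredDK a : clustered U K b (a + K) <-> clustered U K b a.
Proof.
rewrite /clustered (_ : a + K + K = a + 2 * K)%N; last lia.
rewrite (_ : (a + K + 2 * K).-1 = (a + K).-1 + 2 * K)%N; last lia.
by rewrite !U_period; split=> -[le1 le2]; split; lia.
Qed.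

Lemma clustered_small a :
  clustered U K b a -> exists2 ks, (0 < ks <= K)%N & clustered U K b ks.
Proof.
elim/ltn_ind: a => a IH cl_a.
have [le_aK | lt_Ka] := leqP a K.
  have [a0 | a_gt0] := posnP a; last by exists a; rewrite ?a_gt0.
  exists K; first by rewrite K_gt0 leqnn.
  by rewrite -[X in clustered _ _ _ X]add0n clusteredDK -a0.
by apply: (IH (a - K)%N); [lia | rewrite -clusteredDK subnK // ltnW].
Qed.

Lemma gap_pair ks : (0 < ks)%N ->
  gap U ks + gap U (ks + K) = M - (U (ks + K).-1 - U ks) - (U (ks + 2 * K).-1 - U (ks + K)%N).
Proof.
move=> ks_gt0; rewrite /gap (_ : (ks + 2 * K).-1 = ks.-1 + 2 * K)%N ?U_period; lia.
Qed.

Lemma gap_pair_off ks k : (0 < k <= K)%N -> (0 < ks <= K)%N -> k != ks ->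
  gap U k + gap U (k + K) <= (U (ks + K).-1 - U ks) + (U (ks + 2 * K).-1 - U (ks + K)%N).
Proof.
move=> k_range ks_range ne_k_ks.
have gap_le i p q : (p <= i.-1)%N -> (i <= q)%N -> gap U i <= U q - U p.
  by move=> le_p le_q; have := U_homo le_p; have := U_homo le_q; rewrite /gap; lia.
have [lt_k_ks | lt_ks_k] : (k < ks)%N \/ (ks < k)%N by lia.
  have gap_period : gap U k = gap U (k + 2 * K).
    by rewrite /gap (_ : (k + 2 * K).-1 = k.-1 + 2 * K)%N ?U_period; lia.
  by rewrite gap_period addrC lerD // gap_le //; lia.
by rewrite lerD // gap_le //; lia.
Qed.

Lemma big_gap_pairE ks k : 4 * b < M -> clustered U K b ks ->
    (0 < ks <= K)%N -> (0 < k <= K)%N ->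
  (M < 2 * (gap U k + gap U (k + K))) = (k == ks).
Proof.
move=> b_small [spread1 spread2] ks_range k_range.
have [->|ne_k_ks] := eqVneq k ks; first by rewrite gap_pair; lia.
by have := gap_pair_off k_range ks_range ne_k_ks; lia.
Qed.

End Gaps.

Definition unwrap (S : seq int) (M : int) (i : nat) : int :=
  nth 0 S (i %% size S) + (i %/ size S)%:Z * M.

Section Unwrap.

Variables (S : seq int) (M : int).
Hypotheses (S_sorted : sorted <=%O S) (S_range : {in S, forall x, 0 <= x < M})
  (size_S_gt0 : (0 < size S)%N).

Local Notation n := (size S).
Local Notation U := (unwrap S M).

Lemma unwrapE j i : (i < n)%N -> U (j * n + i) = nth 0 S i + j%:Z * M.
Proof.
by move=> lt_in; rewrite /unwrap modnMDl modn_small // divnMDl // divn_small // addn0.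
Qed.

Lemma unwrapD i : U (i + n) = U i + M.
Proof.
rewrite {1}(divn_eq i n) -addnA [(_ %% n + n)%N]addnC addnA -mulSnr.
by rewrite unwrapE ?ltn_pmod // /unwrap -addn1 PoszD mulrDl mul1r addrA.
Qed.

Lemma unwrap_small i : (i < n)%N -> U i = nth 0 S i.
Proof. by move=> lt_in; rewrite -[i]add0n -(mul0n n) unwrapE // mul0r addr0. Qed.

Lemma unwrap_homo : {homo U : i j / (i <= j)%N >-> i <= j}.
Proof.
apply: homo_leq; [exact: lexx | exact: le_trans |].
elim/ltn_ind => i IH.
case: (ltngtP i.+1 n) => [lt_i1n | gt_i1n | eq_i1n].
- rewrite (unwrap_small (ltnW lt_i1n)) (unwrap_small lt_i1n).
  by apply: le_sorted_leq_nth; rewrite ?inE ?(ltnW lt_i1n).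
- have -> : i = (i - n + n)%N by rewrite subnK // -ltnS ltnW.
  by rewrite -addSn !unwrapD lerD2r IH // ltn_subrL size_S_gt0 (leq_trans size_S_gt0).
- have lt_in : (i < n)%N by rewrite -eq_i1n.
  rewrite eq_i1n -[n]add0n unwrapD !unwrap_small //.
  have := S_range (mem_nth 0 lt_in); have := S_range (mem_nth 0 size_S_gt0).
  by move=> /andP[S0_ge0 _] /andP[_ Si_lt]; rewrite (le_trans (ltW Si_lt)) // lerDr.
Qed.

Lemma map_unwrap_period j : [seq U i | i <- iota (j * n) n] = [seq x + j%:Z * M | x <- S].
Proof.
rewrite -[(j * n)%N]addn0 iotaDl -map_comp -[in RHS](mkseq_nth 0 S) -map_comp.
by apply/eq_in_map => i; rewrite mem_iota add0n /= => lt_in; rewrite unwrapE.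
Qed.

Lemma count_unwrap_window (E : seq int) (w : int) (P : pred int) :
    perm_eq S [seq (x %% M)%Z | x <- E] -> 0 <= w <= 2 * M ->
    {in E, forall x, w <= x < w + M} -> (forall x, P x -> w <= x < w + M) ->
  count P [seq U i | i <- iota 0 (3 * n)] = count P E.
Proof.
move=> S_perm w_range E_window P_window.
have -> : iota 0 (3 * n) = iota (0 * n) n ++ iota (1 * n) n ++ iota (2 * n) n.
  by rewrite !mulSn mul0n !addn0 !iotaD add0n.
rewrite !map_cat !count_cat !map_unwrap_period !count_map !(permP S_perm) !count_map addnA.
have M_gt0 : 0 < M by have /andP[S0_ge0 S0_lt] := S_range (mem_nth 0 size_S_gt0); lia.
apply: count_add3 => x /E_window x_win /=.
set r := (x %% M)%Z; set q := (x %/ M)%Z.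
have x_eq : x = r + q * M by rewrite addrC -divz_eq.
have r_range : 0 <= r < M by rewrite modz_ge0 ?ltz_pmod ?gt_eqF.
have q_range : 0 <= q <= 2 by nia.
(* Of r, r + M and r + 2 M, only x itself lies in the window. *)
have P_shift (j : int) : P (r + j * M) = (j == q) && P x.
  have [->|ne_jq] := eqVneq j q; first by rewrite -x_eq.
  by apply/negbTE/negP => /P_window; nia.
by rewrite !P_shift; nia.
Qed.

Lemma unwrap_clustered (E1 E2 : seq int) (K : nat) (w b : int) :
    (0 < K)%N -> n = (2 * K)%N -> perm_eq S [seq (x %% M)%Z | x <- E1 ++ E2] ->
    0 <= w <= 2 * M -> {in E1 ++ E2, forall x, w <= x < w + M} ->
    size E1 = K -> size E2 = K -> spread_le E1 b -> spread_le E2 b ->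
  exists a, clustered U K b a.
Proof.
move=> K_gt0 size_S S_perm w_range E_window size_E1 size_E2 E1_spread E2_spread.
have M_gt0 : 0 < M by have /andP[S0_ge0 S0_lt] := S_range (mem_nth 0 size_S_gt0); lia.
set t := [seq U i | i <- iota 0 (3 * n)].
have t_sorted : sorted <=%O t.
  by apply: homo_sorted (iota_sorted 0 _) => i j; exact: unwrap_homo.
have t_window P := count_unwrap_window (P := P) S_perm w_range E_window.
have [] := sorted_two_clusters K_gt0 M_gt0 t_sorted t_window E_window
  size_E1 size_E2 E1_spread E2_spread.
rewrite size_map size_iota; set a := count _ t => a_le low up.
have nth_t i : (i < 3 * n)%N -> nth 0 t i = U i.
  by move=> lt_i; rewrite (nth_map 0%N) ?size_iota // nth_iota.
by exists a; rewrite /clustered -!nth_t; try lia.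
Qed.

End Unwrap.

Lemma spread_le_range (f : nat -> int) (lo hi : nat) (O : seq int) (b : int) :
    {homo f : i j / (i <= j)%N >-> i <= j} ->
    {in O, forall x, exists2 j, (lo <= j <= hi)%N & x = f j} ->
  f hi - f lo <= b -> spread_le O b.
Proof.
move=> f_homo O_range le_b x y /O_range[i /andP[lo_i i_hi] ->] /O_range[j /andP[lo_j j_hi] ->].
by have := f_homo _ _ i_hi; have := f_homo _ _ lo_j; lia.
Qed.

Lemma lift_two_arcs (M tau : int) (c : 'I_2 -> int) :
    0 <= tau -> 4 * tau < M -> (forall l, 0 <= c l < M) ->
  exists w (j : 'I_2 -> int), 0 <= w <= 2 * M /\
    forall l, w <= c l + j l * M - tau /\ c l + j l * M + tau < w + M.
Proof.
move=> tau_ge0 tau_small c_range.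
have l_cases (l : 'I_2) : l = ord0 \/ l = ord_max.
  by case: l => -[|[|//]] ?; [left | right]; apply: val_inj.
have := c_range ord0; have := c_range ord_max.
(* If the two arcs wrap around 0, the lower one is lifted by 2M instead of M. *)
have [c01|c10] := lerP (c ord0) (c ord_max).
  have [near|far] := ltrP (c ord_max - c ord0 + 2 * tau) M.
    exists (c ord0 - tau + M), (fun _ => 1); split=> [|l]; first lia.
    by case: (l_cases l) => ->; lia.
  exists (c ord_max - tau + M), (fun l => if val l == 0%N then 2 else 1).
  split=> [|l]; first lia.
  by case: (l_cases l) => -> /=; lia.
have [near|far] := ltrP (c ord0 - c ord_max + 2 * tau) M.
  exists (c ord_max - tau + M), (fun _ => 1); split=> [|l]; first lia.
  by case: (l_cases l) => ->; lia.
exists (c ord0 - tau + M), (fun l => if val l == 0%N then 1 else 2).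
split=> [|l]; first lia.
by case: (l_cases l) => -> /=; lia.
Qed.

Section Residues.

Variables (K M : nat) (m : 'I_K -> nat) (N : 'I_2 -> nat) (Delta : 'I_2 -> 'I_K -> int).
Hypotheses (K_gt0 : (0 < K)%N) (M_gt0 : (0 < M)%N).

Local Notation S := (ssorted M m N Delta).
Local Notation U := (unwrap S M).
Local Notation tau := (tau Delta).

Lemma abs_Delta_le_tau l k : (`|Delta l k| <= tau)%N.
Proof.
exact: leq_trans (leq_bigmax k) (leq_bigmax (F := fun l => \max_(k : 'I_K) `|Delta l k|%N) l).
Qed.

Lemma rtcE l k : rtc M m N Delta l k = (((N l %% M)%N%:Z + Delta l k) %% M%:Z)%Z.
Proof. by rewrite /rtc /rt -modzDml modz_nat modn_dvdm // dvdn_mulr. Qed.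

Lemma svalsE :
  svals M m N Delta = [seq rtc M m N Delta ord0 k | k <- enum 'I_K]
                        ++ [seq rtc M m N Delta ord_max k | k <- enum 'I_K].
Proof.
rewrite /svals !enum_ordSl enum_ord0 /= cats0.
by have -> : lift ord0 ord0 = ord_max :> 'I_2 by apply: val_inj.
Qed.

Lemma ssorted_sorted : sorted <=%O S.
Proof. exact/sort_sorted/le_total. Qed.

Lemma perm_ssorted : perm_eq S (svals M m N Delta).
Proof. exact/permPl/perm_sort. Qed.

Lemma size_ssorted : size S = (2 * K)%N.
Proof.
by rewrite (perm_size perm_ssorted) svalsE size_cat !size_map -enumT size_enum_ord; lia.
Qed.

Lemma ssorted_range : {in S, forall x, 0 <= x < M%:Z}.
Proof.
move=> x; rewrite (perm_mem perm_ssorted) => /allpairsP[[l k] [_ _ ->]] /=.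
by rewrite /rtc modz_ge0 ?ltz_pmod // eqz_nat -lt0n.
Qed.

Lemma size_ssorted_gt0 : (0 < size S)%N.
Proof. by rewrite size_ssorted muln_gt0. Qed.

Lemma unwrap_ssorted_period i : U (i + 2 * K)%N = U i + M%:Z.
Proof. by rewrite -size_ssorted unwrapD // size_ssorted_gt0. Qed.

Lemma unwrap_ssorted_homo : {homo U : i j / (i <= j)%N >-> i <= j}.
Proof. exact: unwrap_homo ssorted_sorted ssorted_range size_ssorted_gt0. Qed.

Lemma ssorted_clustered : (8 * tau < M)%N ->
  exists2 ks, (0 < ks <= K)%N & clustered U K (2 * tau%:Z) ks.
Proof.
move=> tau_small; set c := fun l => (N l %% M)%N%:Z.
have c_range l : 0 <= c l < M%:Z by rewrite /c; have := ltn_pmod (N l) M_gt0; lia.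
have tau_lt : 4 * tau%:Z < M%:Z by lia.
have [w [j [w_range arcs]]] := lift_two_arcs (le0z_nat tau) tau_lt c_range.
pose E l := [seq c l + j l * M%:Z + Delta l k | k <- enum 'I_K].
have mod_E l : [seq (x %% M%:Z)%Z | x <- E l] = [seq rtc M m N Delta l k | k <- enum 'I_K].
  by rewrite -map_comp; apply: eq_map => k /=; rewrite rtcE addrAC addrC modzMDl.
have E_perm : perm_eq S [seq (x %% M%:Z)%Z | x <- E ord0 ++ E ord_max].
  by rewrite map_cat !mod_E -svalsE perm_ssorted.
have E_window : {in E ord0 ++ E ord_max, forall x, w <= x < w + M%:Z}.
  move=> x; rewrite mem_cat => /orP[] /mapP[k _ ->].
    by have := arcs ord0; have := abs_Delta_le_tau ord0 k; lia.
  by have := arcs ord_max; have := abs_Delta_le_tau ord_max k; lia.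
have size_E l : size (E l) = K by rewrite size_map size_enum_ord.
have E_spread l : spread_le (E l) (2 * tau%:Z).
  move=> x y /mapP[k _ ->] /mapP[k' _ ->].
  by have := abs_Delta_le_tau l k; have := abs_Delta_le_tau l k'; lia.
have [a cl_a] := unwrap_clustered ssorted_sorted ssorted_range size_ssorted_gt0 K_gt0
  size_ssorted E_perm w_range E_window (size_E _) (size_E _) (E_spread _) (E_spread _).
by have [ks ks_range cl_ks] := clustered_small unwrap_ssorted_period K_gt0 cl_a; exists ks.
Qed.

Lemma s_unwrap i : (0 < i <= 2 * K)%N -> s M m N Delta i = U i.-1.
Proof.
move=> i_range.
by rewrite /s unwrap_small ?size_ssorted ?ssorted_range ?size_ssorted_gt0 //; lia.
Qed.

Lemma D_unwrap k : (0 < k <= 2 * K)%N -> D M m N Delta k = gap U k.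
Proof.
move=> k_range; rewrite /D /gap; case: eqP => [->|ne_k].
  by rewrite -[X in U X]add0n unwrap_ssorted_period !s_unwrap /= 1?addrAC //; lia.
by rewrite !s_unwrap //; lia.
Qed.

Lemma Omega1_spread k0 b : (0 < k0 <= K)%N -> clustered U K b k0 ->
  spread_le (Omega1 M m N Delta k0) b.
Proof.
move=> k0_range [spread1 _]; apply: (spread_le_range unwrap_ssorted_homo _ spread1).
move=> x /mapP[i]; rewrite mem_iota => i_range ->.
by exists i.-1; [lia | rewrite s_unwrap //; lia].
Qed.

Lemma Omega2_spread k0 b : (0 < k0 <= K)%N -> clustered U K b k0 ->
  spread_le (Omega2 M m N Delta k0) b.
Proof.
move=> k0_range [_ spread2].
have U_homo : {homo (fun j => U j - M%:Z) : i j / (i <= j)%N >-> i <= j}.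
  by move=> i j /unwrap_ssorted_homo; rewrite lerD2r.
apply: (spread_le_range U_homo (lo := (k0 + K)%N) (hi := (k0 + 2 * K).-1)); last by lia.
have s_period i : (0 < i <= 2 * K)%N -> s M m N Delta i = U (i.-1 + 2 * K)%N - M%:Z.
  by move=> i_range; rewrite unwrap_ssorted_period s_unwrap // addrK.
rewrite /Omega2; case: eqP => [->|ne_k0] x.
  move=> /mapP[i]; rewrite mem_iota => i_range ->.
  by exists (i.-1 + 2 * K)%N; [lia | apply: s_period; lia].
rewrite mem_cat => /orP[] /mapP[i]; rewrite mem_iota => i_range ->.
  by exists i.-1; [lia | rewrite s_unwrap //; lia].
by exists (i.-1 + 2 * K)%N; [lia | apply: s_period; lia].
Qed.

Lemma big_D_pairE ks k : (8 * tau < M)%N -> clustered U K (2 * tau%:Z) ks ->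
    (0 < ks <= K)%N -> (0 < k <= K)%N ->
  (M%:Z < 2 * (D M m N Delta k + D M m N Delta (k + K))) = (k == ks).
Proof.
move=> tau_small cl_ks ks_range k_range; rewrite !D_unwrap; try lia.
have b_small : 4 * (2 * tau%:Z) < M%:Z by lia.
exact: (big_gap_pairE unwrap_ssorted_homo unwrap_ssorted_period K_gt0 b_small cl_ks
  ks_range k_range).
Qed.

End Residues.

Theorem lemma2 (K M : nat) (m : 'I_K -> nat) (N : 'I_2 -> nat)
    (Delta : 'I_2 -> 'I_K -> int) :
  (2 <= K)%N ->
  (forall i : 'I_K, 0 < m i)%N ->
  (forall i j : 'I_K, (i < j)%N -> (m i < m j)%N) ->
  (forall i j : 'I_K, i != j -> coprime (m i) (m j)) ->
  (0 < M)%N ->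
  (8 * tau Delta < M)%N ->
  (exists! k0 : nat, [/\ (1 <= k0)%N, (k0 <= K)%N &
      M%:Z < 2 * (D M m N Delta k0 + D M m N Delta (k0 + K))]) /\
  (forall k0 : nat, (1 <= k0)%N -> (k0 <= K)%N ->
      M%:Z < 2 * (D M m N Delta k0 + D M m N Delta (k0 + K)) ->
      spread_le (Omega1 M m N Delta k0) (2 * (tau Delta)%:Z) /\
      spread_le (Omega2 M m N Delta k0) (2 * (tau Delta)%:Z)).
Proof.
move=> K_ge2 _ _ _ M_gt0 tau_small.
have K_gt0 : (0 < K)%N by lia.
have [ks ks_range cl_ks] := ssorted_clustered m N K_gt0 M_gt0 tau_small.
have big_pairE k : (0 < k <= K)%N ->
    (M%:Z < 2 * (D M m N Delta k + D M m N Delta (k + K))) = (k == ks).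
  exact: big_D_pairE.
split.
  exists ks; split=> [|k [k_ge1 k_le]].
    by case/andP: ks_range => ks_gt0 ks_le; split; rewrite // big_pairE ?ks_gt0 ?eqxx.
  by rewrite big_pairE ?k_ge1 // => /eqP.
move=> k0 k0_ge1 k0_le; rewrite big_pairE ?k0_ge1 // => /eqP ->.
by split; [apply: Omega1_spread | apply: Omega2_spread].
Qed.
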